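(* Let $P\subseteq\mathbb{R}^d$ be finite. Suppose there is a point $\mathbf{p}=(p_1,\dots,p_d)\in P$ such that for each $i\in\{1,\dots,d\}$ either $p_i=\max\{q_i:\mathbf{q}\in P\}$ or $p_i=\min\{q_i:\mathbf{q}\in P\}$. Then $\mathbf{p}$ is a leaf node in every optimal Steiner tree of $P$.
   Context: For a finite set $P\subset\mathbb{R}^d$ (the terminals), a Steiner tree of $P$ is a tree whose vertex set is $P\cup S$ for some finite $S\subset\mathbb{R}^d$ (the Steiner points), with edge lengths the Euclidean distances between endpoints; its cost is the total edge length. An optimal Steiner tree is one of minimum cost. By convention, optimal Steiner trees contain no trivial Steiner points (Steiner points of degree $2$ that merely subdivide a straight segment). *)

From HB Require Import structures.
From mathcomp Require Import all_boot all_order all_algebra.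
From mathcomp Require Export finmap.
From mathcomp Require Export reals.

Set Implicit Arguments.
Unset Strict Implicit.
Unset Printing Implicit Defensive.

Import Order.TTheory GRing.Theory Num.Theory.
Local Open Scope ring_scope.
Local Open Scope fset_scope.

Section Steiner.
Variables (R : realType) (d : nat).

Notation point := 'rV[R]_d.

Definition edist (x y : point) : R :=
  Num.sqrt (\sum_(i < d) (x 0 i - y 0 i) ^+ 2).

(* A finite geometric graph: vertices are points of R^d, edges are pairs of
   points; an edge (x,y) stands for the unordered edge {x,y}. *)
Record sgraph := SGraph { sgV : {fset point}; sgE : {fset point * point} }.

Definition adj (G : sgraph) : rel point :=
  fun x y => ((x, y) \in sgE G) || ((y, x) \in sgE G).

Definition is_tree (G : sgraph) : Prop :=
  [/\ forall e, e \in sgE G -> [/\ e.1 \in sgV G, e.2 \in sgV G & e.1 != e.2],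
      forall x y, (x, y) \in sgE G -> (y, x) \notin sgE G,
      forall x y, x \in sgV G -> y \in sgV G ->
        exists s : seq point, path (adj G) x s /\ last x s = y
    & forall c : seq point, (3 <= size c)%N -> uniq c -> ~~ cycle (adj G) c].

Definition cost (G : sgraph) : R :=
  \sum_(e <- enum_fset (sgE G)) edist e.1 e.2.

Definition degree (G : sgraph) (x : point) : nat :=
  #|` [fset e in sgE G | (e.1 == x) || (e.2 == x)]|.

Definition steiner_tree (P : {fset point}) (G : sgraph) : Prop :=
  P `<=` sgV G /\ is_tree G.

Definition trivial_steiner (P : {fset point}) (G : sgraph) (s : point) : Prop :=
  [/\ s \in sgV G, s \notin P, degree G s = 2%N &
      exists a b (t : R), [/\ adj G s a, adj G s b, a != b,
                            0 <= t <= 1 & s = ((1 - t) *: a + t *: b)%R]].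

(* optimal Steiner tree (with the convention: no trivial Steiner points) *)
Definition optimal_steiner (P : {fset point}) (G : sgraph) : Prop :=
  [/\ steiner_tree P G,
      forall s, ~ trivial_steiner P G s &
      forall G', steiner_tree P G' -> cost G <= cost G'].

End Steiner.

From HB Require Import structures.
From mathcomp Require Import all_boot all_order all_algebra finmap reals.
From mathcomp Require Import ring lra.
Import Order.TTheory GRing.Theory Num.Theory.
Local Open Scope ring_scope.
Set Implicit Arguments.
Unset Strict Implicit.
Unset Printing Implicit Defensive.

(* An optimal Steiner tree lies in every closed halfspace containing its
   terminals: otherwise translate the layer of vertices farthest outside by a
   small amount back towards the halfspace; this keeps the graph a Steiner tree,
   shortens every edge leaving the layer (one exists, since the tree reaches a
   terminal) and lengthens none.  At a terminal p that is extreme in every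
   coordinate, all vertices therefore lie in one closed orthant at p, so the
   unit vectors from p to its neighbours have pairwise nonnegative inner
   products and their sum w satisfies |w|^2 >= deg p.  If deg p >= 2, moving p
   to a new Steiner point p + eps w and hanging p on it as a leaf changes the
   cost by eps (|w| - |w|^2) + O(eps^2) < 0, contradicting optimality.  As P has
   a second terminal, p is not isolated, hence deg p = 1. *)

Section RealFacts.
Variable R : realType.

Lemma sqrtr_le_tangent (x r : R) : 0 < r -> 0 <= x ->
  Num.sqrt x <= (x + r ^+ 2) / (2 * r).
Proof.
move=> r0 x0; rewrite ler_pdivlMr ?mulr_gt0 //.
have := sqr_ge0 (Num.sqrt x - r); rewrite sqrrB sqr_sqrtr //; nra.
Qed.

Lemma exists_pos_lt_seq (s : seq R) :
  exists2 e : R, 0 < e & {in s, forall x, 0 < x -> e < x}.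
Proof.
elim: s => [|a s [e e0 es]]; first by exists 1.
exists (Num.min e (if 0 < a then a / 2 else e)).
  by case: ifP => a0; rewrite lt_min e0 ?divr_gt0.
move=> x /[!inE] /orP[/eqP-> a0 | /es xe /xe].
  by rewrite a0 gt_min ltr_pdivrMr //; apply/orP; right; lra.
by apply: le_lt_trans; rewrite ge_min lexx.
Qed.

Lemma seq_argmax (T : eqType) (F : T -> R) (s : seq T) x0 : x0 \in s ->
  exists2 m, m \in s & {in s, forall y, F y <= F m}.
Proof.
elim: s x0 => // a [|b s] IH x0 _.
  by exists a => [|y /[!inE] /eqP->]; rewrite ?inE.
have [m ms mmax] := IH b (mem_head _ _).
have [Fam | Fma] := lerP (F a) (F m).
  exists m; first by rewrite inE ms orbT.
  by move=> y /[!inE] /orP[/eqP-> | /mmax].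
exists a; first exact: mem_head.
by move=> y /[!inE] /orP[/eqP-> // | /mmax/le_trans]; apply; apply: ltW.
Qed.

Lemma ler_fsum_term (K : choiceType) (E : {fset K}) (P : pred K) (F : K -> R) e0 :
  {in E, forall e, P e -> 0 <= F e} -> e0 \in E -> P e0 ->
  F e0 <= \sum_(e <- E | P e) F e.
Proof.
move=> F0 e0E Pe0; rewrite big_mkcond (big_fsetD1 e0) //= Pe0 lerDl big_seq.
by apply: sumr_ge0 => e /fsetD1P[_ eE]; case: ifP => // /(F0 _ eE).
Qed.

Lemma ltr_fsum (K : choiceType) (E : {fset K}) (F G : K -> R) e0 :
  {in E, forall e, F e <= G e} -> e0 \in E -> F e0 < G e0 ->
  \sum_(e <- E) F e < \sum_(e <- E) G e.
Proof.
move=> FG e0E lt0; rewrite (big_fsetD1 e0) // [X in _ < X](big_fsetD1 e0) //=.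
by apply: ltr_leD => //; rewrite !big_seq; apply: ler_sum => e /fsetD1P[_ /FG].
Qed.

End RealFacts.

Lemma path_exit (T : Type) (e : rel T) (Q : pred T) x s :
  path e x s -> Q x -> ~~ Q (last x s) -> exists y z, [/\ Q y, ~~ Q z & e y z].
Proof.
elim: s x => [|z s IH] x /=; first by move=> _ ->.
case/andP=> xz zs Qx; have [Qz | NQz] := boolP (Q z); first exact: IH.
by exists x, z.
Qed.

Section Euclid.
Variables (R : realType) (d : nat).
Notation point := 'rV[R]_d.
Implicit Types (x y u v : point).

Definition dot x y : R := \sum_(i < d) x 0 i * y 0 i.

Definition enorm x := Num.sqrt (dot x x).

Lemma dotC x y : dot x y = dot y x.
Proof. by apply: eq_bigr => i _; rewrite mulrC. Qed.

Lemma dot_ge0 x : 0 <= dot x x.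
Proof. by apply: sumr_ge0 => i _; rewrite -expr2 sqr_ge0. Qed.

Lemma dotBl x y u : dot (x - y) u = dot x u - dot y u.
Proof. by rewrite /dot -sumrB; apply: eq_bigr => i _; rewrite !mxE mulrBl. Qed.

Lemma dotZl a x y : dot (a *: x) y = a * dot x y.
Proof. by rewrite /dot mulr_sumr; apply: eq_bigr => i _; rewrite mxE mulrA. Qed.

Lemma dotZr a x y : dot x (a *: y) = a * dot x y.
Proof. by rewrite dotC dotZl dotC. Qed.

Lemma dotBB x y : dot (x - y) (x - y) = dot x x - 2 * dot x y + dot y y.
Proof. by rewrite !dotBl ![dot _ (_ - _)]dotC !dotBl [dot y x]dotC; ring. Qed.

Lemma dot_suml (I : Type) (s : seq I) (P : pred I) (F : I -> point) y :
  dot (\sum_(k <- s | P k) F k) y = \sum_(k <- s | P k) dot (F k) y.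
Proof.
rewrite /dot (eq_bigr (fun i => \sum_(k <- s | P k) F k 0 i * y 0 i)).
  by rewrite exchange_big.
by move=> i _; rewrite summxE mulr_suml.
Qed.

Lemma dot_delta x (i : 'I_d) : dot x (delta_mx 0 i) = x 0 i.
Proof.
rewrite /dot (bigD1 i) //= big1 => [|j ji]; rewrite !mxE ?eqxx ?mulr1 ?addr0 //.
by rewrite (negbTE ji) mulr0.
Qed.

Lemma enorm_ge0 x : 0 <= enorm x.
Proof. exact: sqrtr_ge0. Qed.

Lemma enorm_sqr x : enorm x ^+ 2 = dot x x.
Proof. exact/sqr_sqrtr/dot_ge0. Qed.

Lemma enormZ a x : 0 <= a -> enorm (a *: x) = a * enorm x.
Proof.
by move=> a0; rewrite /enorm dotZl dotZr mulrA sqrtrM ?sqr_ge0 // sqrtr_sqr ger0_norm.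
Qed.

Lemma enorm_eq0 x : (enorm x == 0) = (x == 0).
Proof.
apply/idP/eqP => [|->]; last first.
  by rewrite /enorm /dot big1 ?sqrtr0 // => i _; rewrite mxE mul0r.
rewrite sqrtr_eq0 => dx; apply/rowP => i; rewrite mxE; apply/eqP.
have : dot x x == 0 by rewrite eq_le dx dot_ge0.
rewrite psumr_eq0 => [/allP/(_ i (mem_index_enum _))|j _]; rewrite -expr2 ?sqr_ge0 //.
by rewrite sqrf_eq0.
Qed.

Lemma edistE x y : edist x y = enorm (x - y).
Proof. by congr Num.sqrt; apply: eq_bigr => i _; rewrite !mxE expr2. Qed.

Lemma edistxx x : edist x x = 0.
Proof. by rewrite /edist big1 ?sqrtr0 // => i _; rewrite subrr expr0n. Qed.

Lemma edistC x y : edist x y = edist y x.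
Proof. by congr Num.sqrt; apply: eq_bigr => i _; rewrite -sqrrN opprB. Qed.

Lemma edist_gt0 x y : x != y -> 0 < edist x y.
Proof. by move=> xy; rewrite edistE lt_def enorm_eq0 subr_eq0 xy enorm_ge0. Qed.

Lemma enormB_le_tangent u v : 0 < enorm u ->
  enorm (u - v) <= enorm u - dot u v / enorm u + dot v v / (2 * enorm u).
Proof.
move=> u0.
rewrite [X in _ <= X](_ : _ = (dot (u - v) (u - v) + enorm u ^+ 2) / (2 * enorm u)).
  exact: sqrtr_le_tangent (dot_ge0 _).
by rewrite enorm_sqr dotBB -(enorm_sqr u); field; rewrite gt_eqF.
Qed.

End Euclid.

Section Trees.
Local Open Scope fset_scope.
Variables (R : realType) (d : nat).
Notation point := 'rV[R]_d.
Implicit Types (G : sgraph R d) (f : point -> point) (x y s p : point).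

Lemma tree_edge G e : is_tree G -> e \in sgE G ->
  [/\ e.1 \in sgV G, e.2 \in sgV G & e.1 != e.2].
Proof. by case=> + _ _ _; apply. Qed.

Lemma adj_edge G x y : adj G x y ->
  exists2 e, e \in sgE G & (e.1, e.2) = (x, y) \/ (e.1, e.2) = (y, x).
Proof. by case/orP => xy; [exists (x, y); [|left] | exists (y, x); [|right]]. Qed.

Lemma adjC G : symmetric (adj G).
Proof. by move=> x y; rewrite /adj orbC. Qed.

Lemma adj_vertices G x y : is_tree G -> adj G x y -> x \in sgV G /\ y \in sgV G.
Proof. by move=> T /orP[] /(tree_edge T) []. Qed.

Definition map_sgraph f G :=
  SGraph (f @` sgV G) ((fun e => (f e.1, f e.2)) @` sgE G).

Definition inv_on f (V : {fset point}) y := nth y V (find (fun x => f x == y) V).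

Lemma inv_onK f (V : {fset point}) : {in V &, injective f} ->
  {in V, cancel f (inv_on f V)}.
Proof.
move=> inj x xV; have hasx : has (fun z => f z == f x) V by apply/hasP; exists x.
apply: inj => //; last exact/eqP/(nth_find (f x) hasx).
by rewrite mem_nth // -has_find.
Qed.

Lemma map_sgraph_adj f G x y : adj G x y -> adj (map_sgraph f G) (f x) (f y).
Proof. by case/orP => xy; apply/orP; [left | right]; apply: in_imfset xy. Qed.

Lemma map_sgraph_adj_inv f G x y : is_tree G -> {in sgV G &, injective f} ->
  adj (map_sgraph f G) x y ->
  adj G (inv_on f (sgV G) x) (inv_on f (sgV G) y).
Proof.
move=> T inj /orP[] /imfsetP[[a b] /= ab [-> ->]];
  have [aV bV _] := tree_edge T ab; by rewrite /adj !inv_onK // ab ?orbT.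
Qed.

Lemma map_sgraph_tree f G : is_tree G -> {in sgV G &, injective f} ->
  is_tree (map_sgraph f G).
Proof.
move=> T inj; have [edgeV asym conn acyc] := T; split.
- move=> _ /imfsetP[[a b] /= ab ->]; have [aV bV nab] := edgeV _ ab.
  by rewrite /= !in_imfset //; split=> //; apply: contra nab => /eqP/inj->.
- move=> _ _ /imfsetP[[a b] /= ab [-> ->]].
  apply/negP => /imfsetP[[a' b'] /= ab' [ba' ab'E]].
  have [/= aV bV _] := edgeV _ ab; have [/= aV' bV' _] := edgeV _ ab'.
  move: ab'; rewrite -(inj _ _ bV aV' ba') -(inj _ _ aV bV' ab'E) => ba.
  by have := asym _ _ ab; rewrite ba.
- move=> _ _ /imfsetP[a aV ->] /imfsetP[b bV ->].
  have [s [ps <-]] := conn _ _ aV bV; exists (map f s); rewrite last_map.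
  by split=> //; rewrite path_map; apply: sub_path ps => u v; apply: map_sgraph_adj.
- move=> c c3 uc; apply/negP => cc.
  have cV y : y \in c -> y \in f @` sgV G.
    move=> /(next_cycle cc)/orP[] /imfsetP[[a b] /= ab [ea eb]];
      by have [aV bV _] := edgeV _ ab; rewrite ?ea ?eb in_imfset.
  have uc' : uniq (map (inv_on f (sgV G)) c).
    rewrite map_inj_in_uniq // => _ _ /cV/imfsetP[a aV ->] /cV/imfsetP[b bV ->].
    by rewrite !inv_onK // => ->.
  have := acyc _ ^~ uc'; rewrite size_map => /(_ c3) /negP; apply.
  by rewrite cycle_map; apply: sub_cycle cc => u v; apply: map_sgraph_adj_inv.
Qed.

Lemma steiner_tree_map (P : {fset point}) f G : steiner_tree P G ->
  {in sgV G &, injective f} -> {in P, forall q, f q = q} ->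
  steiner_tree P (map_sgraph f G).
Proof.
move=> [PV T] inj fP; split; last exact: map_sgraph_tree.
by apply/fsubsetP => q qP; rewrite -(fP q qP) in_imfset //; apply: (fsubsetP PV).
Qed.

Lemma cost_map_sgraph f G : is_tree G -> {in sgV G &, injective f} ->
  cost (map_sgraph f G) = \sum_(e <- sgE G) edist (f e.1) (f e.2).
Proof.
move=> T inj; rewrite /cost big_imfset // => -[a b] [a' b'] ab ab' [].
have [aV bV _] := tree_edge T ab; have [aV' bV' _] := tree_edge T ab'.
by move=> /inj-> // /inj->.
Qed.

Definition add_leaf G s p := SGraph (p |` sgV G) ((s, p) |` sgE G).

Lemma add_leaf_adj G s p x y : adj (add_leaf G s p) x y =
  [|| (x == s) && (y == p), (x == p) && (y == s) | adj G x y].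
Proof.
rewrite /adj /= !inE !xpair_eqE -!orbA; congr (_ || _).
by rewrite orbCA andbC.
Qed.

Section AddLeaf.
Variables (G : sgraph R d) (s p : point).
Hypotheses (T : is_tree G) (sV : s \in sgV G) (pNV : p \notin sgV G).

Let adj_leaf y : adj (add_leaf G s p) p y -> y = s.
Proof.
have sp : (p == s) = false by apply: contraNF pNV => /eqP->.
rewrite add_leaf_adj sp => /or3P[// | /andP[_ /eqP] // |].
by move=> /(adj_vertices T)[pV _]; move: pNV; rewrite pV.
Qed.

Lemma add_leaf_acyclic c : (3 <= size c)%N -> uniq c ->
  ~~ cycle (adj (add_leaf G s p)) c.
Proof.
move=> c3 uc; apply/negP => cc; have [_ _ _ acyc] := T.
have [pc | pNc] := boolP (p \in c); last first.
  apply: (negP (acyc c c3 uc)); apply: (sub_in_cycle (P := predC1 p)) cc.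
    move=> x y /= xp yp; rewrite add_leaf_adj.
    by rewrite (negbTE xp) (negbTE yp) !andbF.
  by apply/allP => x xc /=; apply: contraNneq pNc => <-.
have [i r er] := rot_to pc.
move: c3 uc cc; rewrite -(size_rot i) -(rot_uniq i) -(rot_cycle i) er.
case: r {er} => [|a [|b r]] //= _ /andP[_ /andP[aNbr _]].
rewrite rcons_path => /and3P[/adj_leaf as_ _].
rewrite adjC => /andP[_ /adj_leaf ls].
by move: aNbr; rewrite as_ -ls mem_last.
Qed.

Lemma add_leaf_tree : is_tree (add_leaf G s p).
Proof.
have [edgeV asym conn _] := T.
have Np x : (x, p) \notin sgE G /\ (p, x) \notin sgE G.
  by split; apply/negP => /edgeV[] /=; rewrite (negbTE pNV).
have sp : s != p by apply: contraNneq pNV => <-.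
have liftG x y : adj G x y -> adj (add_leaf G s p) x y.
  by move=> xy; rewrite add_leaf_adj xy !orbT.
split=> [e | x y | x y | ]; rewrite /= ?inE.
- case/orP=> [/eqP-> | /edgeV[xV yV xy]]; first by rewrite /= eqxx sV orbT.
  by rewrite xV yV !orbT.
- case/orP=> [/eqP[-> ->] | xy].
    by rewrite xpair_eqE eq_sym (negbTE sp); case: (Np s) => _ /negbTE->.
  rewrite negb_or (asym _ _ xy) andbT xpair_eqE.
  by apply/negP => /andP[_ /eqP xp]; case: (Np y) => _; rewrite -xp xy.
- have liftP u v : u \in sgV G -> v \in sgV G ->
      exists t, path (adj (add_leaf G s p)) u t /\ last u t = v.
    move=> uV vV; have [t [pt lt]] := conn _ _ uV vV.
    by exists t; split=> //; apply: sub_path liftG _ _ pt.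
  case/orP=> [/eqP-> | xV] /orP[/eqP-> | yV]; last exact: liftP.
  + by exists [::].
  + have [t [pt <-]] := liftP _ _ sV yV; exists (s :: t).
    by rewrite /= pt add_leaf_adj !eqxx orbT.
  + have [t [pt lt]] := liftP _ _ xV sV; exists (rcons t p).
    by rewrite rcons_path pt lt last_rcons add_leaf_adj !eqxx.
- exact: add_leaf_acyclic.
Qed.

Lemma cost_add_leaf : cost (add_leaf G s p) = (edist s p + cost G)%R.
Proof. by rewrite /cost big_fsetU1 //; apply: contra pNV => /(tree_edge T)[]. Qed.

End AddLeaf.

Lemma tree_degree_gt0 G x y :
  is_tree G -> x \in sgV G -> y \in sgV G -> x != y -> (0 < degree G x)%N.
Proof.
move=> T xV yV xy; have [_ _ conn _] := T; have [[|z s] [/= xs sy]] := conn x y xV yV.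
  by rewrite sy eqxx in xy.
have [e eE xe] := adj_edge (andP xs).1.
rewrite cardfs_gt0; apply/fset0Pn; exists e; rewrite !inE eE /=.
by case: xe => -[-> ->]; rewrite eqxx ?orbT.
Qed.

End Trees.

Section LowerTop.
Variables (R : realType) (d : nat) (G : sgraph R d) (v : 'rV[R]_d) (M eps : R).
Hypotheses (v1 : dot v v = 1) (eps0 : 0 < eps) (Mtop : {in sgV G, forall y, dot y v <= M})
  (gap : {in sgV G, forall y, dot y v < M -> eps < M - dot y v}).

Definition lower_top (y : 'rV[R]_d) := if dot y v == M then y - eps *: v else y.

Let dot_lowered y : dot (y - eps *: v) v = dot y v - eps.
Proof. by rewrite dotBl dotZl v1 mulr1. Qed.

Let below_top y : y \in sgV G -> dot y v != M -> dot y v < M.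
Proof. by move=> yV; rewrite lt_def eq_sym => ->; apply: Mtop. Qed.

Lemma lower_top_inj : {in sgV G &, injective lower_top}.
Proof.
have mixed y z : z \in sgV G -> dot y v = M -> dot z v != M -> y - eps *: v != z.
  move=> zV yM zM; apply/eqP => yz; have := gap zV (below_top zV zM).
  by rewrite -yz dot_lowered yM; lra.
move=> y z yV zV; rewrite /lower_top.
case: (eqVneq (dot y v) M) => yM; case: (eqVneq (dot z v) M) => zM.
- exact: subIr.
- by move/eqP; rewrite (negbTE (mixed _ _ zV yM zM)).
- by move/esym/eqP; rewrite (negbTE (mixed _ _ yV zM yM)).
- by [].
Qed.

Lemma edist_lower_top_lt y z : z \in sgV G -> dot y v = M -> dot z v < M ->
  edist (lower_top y) (lower_top z) < edist y z.
Proof.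
move=> zV yM zM; rewrite /lower_top yM eqxx (lt_eqF zM) !edistE.
have -> : y - eps *: v - z = (y - z) - eps *: v by rewrite addrAC.
rewrite /enorm ltr_sqrt; last first.
  rewrite -sqrtr_gt0 -/(enorm _) -edistE edist_gt0 //.
  by apply: contraTneq zM => <-; rewrite yM ltxx.
rewrite [dot (_ - eps *: v) _]dotBB !dotZr dotZl v1 [dot (y - z) v]dotBl yM.
have : 0 < eps * (M - dot z v - eps) by rewrite mulr_gt0 // subr_gt0 gap.
nra.
Qed.

Lemma edist_lower_top_le y z : y \in sgV G -> z \in sgV G ->
  edist (lower_top y) (lower_top z) <= edist y z.
Proof.
move=> yV zV; case: (eqVneq (dot y v) M) => yM; case: (eqVneq (dot z v) M) => zM.
- by rewrite /lower_top yM zM eqxx !edistE opprB addrA subrK.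
- exact/ltW/edist_lower_top_lt/below_top.
- by rewrite edistC [edist y z]edistC; exact/ltW/edist_lower_top_lt/below_top.
- by rewrite /lower_top (negbTE yM) (negbTE zM).
Qed.

End LowerTop.

Lemma optimal_steiner_halfspace (R : realType) (d : nat) (P : {fset 'rV[R]_d})
    (G : sgraph R d) (v : 'rV[R]_d) (c : R) :
  optimal_steiner P G -> dot v v = 1 -> P != fset0 ->
  {in P, forall q, dot q v <= c} -> {in sgV G, forall x, dot x v <= c}.
Proof.
move=> [Gst _ opt] v1 /fset0Pn[q qP] Pc x xV; rewrite leNgt; apply/negP => cx.
have [PV T] := Gst; have [_ _ conn _] := T.
have [m mV mmax] := seq_argmax (fun y => dot y v) xV; set M := dot m v in mmax.
have cM : c < M by apply: lt_le_trans cx (mmax _ xV).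
have [eps eps0 epsgap] := exists_pos_lt_seq [seq M - dot y v | y <- sgV G].
have gap : {in sgV G, forall y, dot y v < M -> eps < M - dot y v}.
  by move=> y yV yM; apply: epsgap; [apply: map_f | rewrite subr_gt0].
have qV : q \in sgV G by apply: (fsubsetP PV).
have qM : dot q v < M by apply: le_lt_trans (Pc _ qP) cM.
have [y [z [/eqP yM zM yz]]] : exists y z, [/\ dot y v == M, dot z v != M & adj G y z].
  have [s [ms sq]] := conn m q mV qV.
  apply: (path_exit (Q := fun y => dot y v == M)) ms _ _; first exact: eqxx.
  by rewrite /= sq (lt_eqF qM).
have [e eE ye] := adj_edge yz; have [e1V e2V _] := tree_edge T eE.
have inj := lower_top_inj v1 mmax gap.
have Gphi : steiner_tree P (map_sgraph (lower_top v M eps) G).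
  apply: steiner_tree_map Gst inj _.
  by move=> p pP; rewrite /lower_top (lt_eqF (le_lt_trans (Pc _ pP) cM)).
have := opt _ Gphi; rewrite cost_map_sgraph //.
apply/negP; rewrite -ltNge; apply: ltr_fsum eE _ => [f fE | ].
  have [f1V f2V _] := tree_edge T fE;
  exact (edist_lower_top_le v1 eps0 mmax gap f1V f2V).
have zV : z \in sgV G by case: ye => -[e1 e2]; rewrite -?e1 -?e2.
have zlt : dot z v < M by rewrite lt_neqAle zM mmax.
have lt := edist_lower_top_lt v1 eps0 gap zV yM zlt.
by case: ye => -[-> ->] //; rewrite edistC [edist z y]edistC.
Qed.

Section Coordinates.
Variables (R : realType) (d : nat) (P : {fset 'rV[R]_d}) (G : sgraph R d).
Hypotheses (Gopt : optimal_steiner P G) (P0 : P != fset0).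

Lemma optimal_steiner_coord_le (i : 'I_d) (c : R) :
  {in P, forall q : 'rV_d, q 0 i <= c} -> {in sgV G, forall x : 'rV_d, x 0 i <= c}.
Proof.
move=> Pc x xV; rewrite -(dot_delta x).
apply: (optimal_steiner_halfspace Gopt _ P0) xV => [|q qP]; rewrite dot_delta ?Pc //.
by rewrite mxE !eqxx.
Qed.

Lemma optimal_steiner_coord_ge (i : 'I_d) (c : R) :
  {in P, forall q : 'rV_d, c <= q 0 i} -> {in sgV G, forall x : 'rV_d, c <= x 0 i}.
Proof.
have dotN x : dot x (- delta_mx 0 i) = - x 0 i.
  by rewrite -scaleN1r dotZr dot_delta mulN1r.
move=> Pc x xV; rewrite -lerN2 -dotN.
apply: (optimal_steiner_halfspace Gopt _ P0) xV => [|q qP]; rewrite dotN ?lerN2 ?Pc //.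
by rewrite !mxE !eqxx opprK.
Qed.

Lemma optimal_steiner_extreme_cone p : p \in P ->
  (forall i : 'I_d, (forall q, q \in P -> q 0 i <= p 0 i) \/
                    (forall q, q \in P -> p 0 i <= q 0 i)) ->
  {in sgV G &, forall x y, 0 <= dot (x - p) (y - p)}.
Proof.
move=> pP ext x y xV yV; apply: sumr_ge0 => i _; rewrite !mxE.
case: (ext i) => [/optimal_steiner_coord_le | /optimal_steiner_coord_ge] box.
  by rewrite mulr_le0 // subr_le0 box.
by rewrite mulr_ge0 // subr_ge0 box.
Qed.

End Coordinates.

Section Split.
Variables (R : realType) (d : nat) (P : {fset 'rV[R]_d}) (G : sgraph R d) (p : 'rV[R]_d).
Notation point := 'rV[R]_d.
Hypotheses (Gopt : optimal_steiner P G) (pV : p \in sgV G)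
  (cone : {in sgV G &, forall x y, 0 <= dot (x - p) (y - p)}).

Definition incident (e : point * point) := (e.1 == p) || (e.2 == p).

Definition other (e : point * point) := if e.1 == p then e.2 else e.1.

Definition dir e := (edist (other e) p)^-1 *: (other e - p).

Definition sumdir := \sum_(e <- sgE G | incident e) dir e.

Let T : is_tree G. Proof. by case: Gopt => -[]. Qed.

Lemma otherP e : e \in sgE G -> incident e ->
  [/\ other e \in sgV G, other e != p & edist e.1 e.2 = edist (other e) p].
Proof.
move=> /(tree_edge T)[e1V e2V e12]; rewrite /incident /other.
case: ifP => [/eqP e1p _ | _ /= /eqP e2p]; last by rewrite -e2p.
by rewrite -e1p eq_sym e12 edistC.
Qed.

Let other_gt0 e : e \in sgE G -> incident e -> 0 < edist (other e) p.
Proof. by move=> eE /(otherP eE)[_ op _]; apply: edist_gt0. Qed.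

Lemma dot_dir_ge0 e f : e \in sgE G -> incident e -> f \in sgE G -> incident f ->
  0 <= dot (dir e) (dir f).
Proof.
move=> eE ie fE if_; have [oeV _ _] := otherP eE ie; have [ofV _ _] := otherP fE if_.
rewrite /dir dotZl dotZr !mulr_ge0 ?cone // invr_ge0 ltW //; exact: other_gt0.
Qed.

Lemma dot_dir_self e : e \in sgE G -> incident e -> dot (dir e) (dir e) = 1.
Proof.
move=> eE ie; have r0 := other_gt0 eE ie.
rewrite /dir dotZl dotZr -enorm_sqr -edistE mulrA -expr2 exprVn mulVf //.
by rewrite expf_eq0 gt_eqF.
Qed.

Lemma dot_dir_sumdir e : e \in sgE G -> incident e -> 1 <= dot (dir e) sumdir.
Proof.
move=> eE ie; rewrite dotC dot_suml -(dot_dir_self eE ie).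
apply: (ler_fsum_term (F := fun f => dot (dir f) (dir e))) => // f fE if_.
exact: dot_dir_ge0.
Qed.

Lemma degree_sum : (degree G p)%:R = \sum_(e <- sgE G | incident e) (1 : R).
Proof. by rewrite /degree card_fset_sum1 natr_sum -big_fset_condE. Qed.

Lemma degree_le_dot_sumdir : (degree G p)%:R <= dot sumdir sumdir.
Proof.
rewrite degree_sum {1}/sumdir dot_suml big_seq_cond [X in _ <= X]big_seq_cond.
apply: ler_sum => e /andP[eE ie].
exact: dot_dir_sumdir.
Qed.

Definition moved (eps : R) := p + eps *: sumdir.

Definition relocate eps x := if x == p then moved eps else x.

Definition split_graph eps := add_leaf (map_sgraph (relocate eps) G) (moved eps) p.

Lemma edist_moved eps : 0 <= eps -> edist (moved eps) p = eps * enorm sumdir.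
Proof. by move=> eps0; rewrite edistE /moved addrAC subrr add0r enormZ. Qed.

Section Perturbation.
Variable eps : R.
Hypotheses (eps0 : 0 < eps) (movedNV : moved eps \notin sgV G).

Lemma relocate_inj : {in sgV G &, injective (relocate eps)}.
Proof.
have Nmoved x : x \in sgV G -> moved eps != x.
  by move=> xV; apply: contraNneq movedNV => ->.
move=> x y xV yV; rewrite /relocate.
case: (eqVneq x p) => [-> | xp]; case: (eqVneq y p) => [-> | yp] //.
- by move/eqP; rewrite (negbTE (Nmoved _ yV)).
- by move/esym/eqP; rewrite (negbTE (Nmoved _ xV)).
Qed.

Let p_notin_relocated : p \notin (relocate eps @` sgV G)%fset.
Proof.
apply/imfsetP => -[x xV]; rewrite /relocate; case: eqP => [_ pm | xp /esym //].
by move: movedNV; rewrite -pm pV.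
Qed.

Lemma split_graph_steiner : steiner_tree P (split_graph eps).
Proof.
have [[PV _] _ _] := Gopt.
have mim : moved eps \in (relocate eps @` sgV G)%fset.
  by apply/imfsetP; exists p; rewrite // /relocate eqxx.
split; last exact: add_leaf_tree (map_sgraph_tree T relocate_inj) mim p_notin_relocated.
apply/fsubsetP => q qP; rewrite !inE; case: (eqVneq q p) => [// | qp].
apply/imfsetP; exists q; first exact: (fsubsetP PV).
by rewrite /relocate (negbTE qp).
Qed.

Lemma edist_relocate_incident e : e \in sgE G -> incident e ->
  edist (relocate eps e.1) (relocate eps e.2) <= edist e.1 e.2
    - eps * dot (dir e) sumdir
    + eps ^+ 2 * dot sumdir sumdir / 2 * (edist (other e) p)^-1.
Proof.
move=> eE ie; have [_ op ->] := otherP eE ie; have r0 := other_gt0 eE ie.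
have -> : edist (relocate eps e.1) (relocate eps e.2) =
    enorm ((other e - p) - eps *: sumdir).
  move: ie op; rewrite /incident /relocate /other /moved.
  case: eqP => [_ _ e2p | _ /= /eqP-> _]; rewrite ?(negbTE e2p) ?eqxx.
    by rewrite edistC edistE opprD addrA.
  by rewrite edistE opprD addrA.
apply: le_trans (enormB_le_tangent _ _) _; rewrite -edistE //.
rewrite /dir dotZl !dotZr dotZl le_eqVlt; apply/predU1l.
by field; rewrite gt_eqF.
Qed.

Lemma edist_relocate_nonincident e : ~~ incident e ->
  edist (relocate eps e.1) (relocate eps e.2) = edist e.1 e.2.
Proof.
by rewrite negb_or => /andP[/negbTE e1p /negbTE e2p]; rewrite /relocate e1p e2p.
Qed.

Lemma cost_split_graph_le :
  cost (split_graph eps) <= cost G - eps * (dot sumdir sumdir - enorm sumdir)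
    + eps ^+ 2 * dot sumdir sumdir / 2
      * \sum_(e <- sgE G | incident e) (edist (other e) p)^-1.
Proof.
have Trel := map_sgraph_tree T relocate_inj.
rewrite /split_graph (cost_add_leaf _ Trel p_notin_relocated).
rewrite (cost_map_sgraph T relocate_inj).
have splitE (F : 'rV[R]_d * 'rV[R]_d -> R) : \sum_(e <- sgE G) F e =
    \sum_(e <- sgE G | incident e) F e + \sum_(e <- sgE G | ~~ incident e) F e.
  exact: bigID.
have nonincE : \sum_(e <- sgE G | ~~ incident e) edist (relocate eps e.1) (relocate eps e.2)
    = \sum_(e <- sgE G | ~~ incident e) edist e.1 e.2.
  by apply: eq_bigr => e; apply: edist_relocate_nonincident.
have incE : \sum_(e <- sgE G | incident e) edist (relocate eps e.1) (relocate eps e.2)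
    <= \sum_(e <- sgE G | incident e) (edist e.1 e.2 - eps * dot (dir e) sumdir
           + eps ^+ 2 * dot sumdir sumdir / 2 * (edist (other e) p)^-1).
  rewrite big_seq_cond [X in _ <= X]big_seq_cond; apply: ler_sum => e /andP[eE ie].
  exact: edist_relocate_incident.
rewrite /cost !splitE nonincE (edist_moved (ltW eps0)).
apply: le_trans (lerD (lexx _) (lerD incE (lexx _))) _.
rewrite !big_split /= sumrN -!mulr_sumr -dot_suml -/sumdir.
lra.
Qed.

End Perturbation.

Lemma exists_split_eps (c : R) : 0 < c -> 0 < enorm sumdir ->
  exists2 eps, 0 < eps & eps < c /\ moved eps \notin sgV G.
Proof.
set n := enorm sumdir => c0 n0.
have [eps eps0 small] := exists_pos_lt_seq (c :: [seq edist x p / n | x <- sgV G]).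
exists eps => //; split; first exact: small (mem_head _ _) c0.
apply/negP => mV; have mp : moved eps != p.
  apply/eqP => mp; have := edist_moved (ltW eps0); rewrite mp edistxx => /eqP.
  by rewrite eq_sym mulf_eq0 !gt_eqF.
have : eps < edist (moved eps) p / n.
  apply: small; last by rewrite divr_gt0 ?edist_gt0.
  by rewrite inE (map_f (fun x => edist x p / n)) ?orbT.
by rewrite edist_moved ?ltW // mulfK ?ltxx // gt_eqF.
Qed.

Lemma optimal_cone_degree_le1 : (degree G p <= 1)%N.
Proof.
rewrite leqNgt; apply/negP => deg2.
have K2 : 2 <= enorm sumdir ^+ 2.
  by rewrite enorm_sqr; apply: le_trans degree_le_dot_sumdir; rewrite ler_nat.
have n0 := enorm_ge0 sumdir; set n := enorm sumdir in K2 n0 *.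
have n1 : 1 < n by nra.
set L := \sum_(e <- sgE G | incident e) (edist (other e) p)^-1.
have L0 : 0 <= L by apply: sumr_ge0 => e _; rewrite invr_ge0 edistE enorm_ge0.
have den0 : 0 < n ^+ 2 * L + 1 by rewrite ltr_wpDl ?mulr_ge0 ?sqr_ge0.
have gain0 : 0 < (n ^+ 2 - n) / (n ^+ 2 * L + 1) by rewrite divr_gt0 // subr_gt0; nra.
have [eps eps0 [small movedNV]] := exists_split_eps gain0 (lt_trans ltr01 n1).
rewrite ltr_pdivlMr // in small.
have [_ _ opt] := Gopt; have := opt _ (split_graph_steiner movedNV).
have := cost_split_graph_le eps0 movedNV; rewrite -enorm_sqr -/n -/L => c1 c2.
have gain : eps * (n ^+ 2 - n) <= eps * (eps * (n ^+ 2 * L) / 2) by lra.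
rewrite ler_pM2l // in gain.
have : 0 <= eps * (n ^+ 2 * L) by rewrite !mulr_ge0 // ltW.
lra.
Qed.

End Split.

Theorem mainTheorem4 (R : realType) (d : nat) (P : {fset 'rV[R]_d})
    (p : 'rV[R]_d) :
  (1 < #|` P|)%N ->
  p \in P ->
  (forall i : 'I_d, (forall q, q \in P -> q 0 i <= p 0 i) \/
                    (forall q, q \in P -> p 0 i <= q 0 i)) ->
  forall G : sgraph R d, optimal_steiner P G -> degree G p = 1%N.
Proof.
move=> P1 pP ext G Gopt; have [[PV T] _ _] := Gopt.
have pV : p \in sgV G := fsubsetP PV p pP.
have /fset0Pn[q /fsetD1P[qp qP]] : (P `\ p)%fset != fset0.
  by rewrite -cardfs_gt0; move: P1; rewrite (cardfsD1 p) pP.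
have P0 : P != fset0 by apply/fset0Pn; exists p.
have cone := optimal_steiner_extreme_cone Gopt P0 pP ext.
apply/eqP; rewrite eqn_leq (optimal_cone_degree_le1 Gopt pV cone) /=.
by apply: tree_degree_gt0 T pV (fsubsetP PV q qP) _; rewrite eq_sym.
Qed.
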